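(* Consider the aggregative game of the context with a single deceptive player $d$ deceiving the set $\mathcal{D}\subset[N]\setminus\{d\}$, where $\alpha_{i,d}\neq0$ for all $i\in\mathcal{D}$, and assume $K_j>0$ for all $j\in[N]$. Define $$\delta^-=\max_{i\in\mathcal{D},\,\alpha_{i,d}>0}\Big(\frac{-\kappa_i}{\alpha_{i,d}}+\frac{1}{\alpha_{i,d}}\sum_{k\neq i}\frac{|\alpha_{i,k}+\alpha_{k,i}|}{2}\Big),\qquad \delta^+=\min_{i\in\mathcal{D},\,\alpha_{i,d}<0}\Big(\frac{-\kappa_i}{\alpha_{i,d}}+\frac{1}{\alpha_{i,d}}\sum_{k\neq i}\frac{|\alpha_{i,k}+\alpha_{k,i}|}{2}\Big).$$ Then for every $\delta$ in the interval $I$ below, the map $x\mapsto\gamma(x,\delta)$ is strongly monotone on $\mathbb{R}^N$: $I=(\delta^-,\infty)$ if $\alpha_{i,d}>0$ for all $i\in\mathcal{D}$; $I=(-\infty,\delta^+)$ if $\alpha_{i,d}<0$ for all $i\in\mathcal{D}$; and $I=(\delta^-,\delta^+)$ otherwise.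
   Context: Aggregative game: $J_i(x)=c_i(x_i)+l_i(x_{-i})x_i$ for $i\in[N]$, where $c_i:\mathbb{R}\to\mathbb{R}$ is twice differentiable with $c_i''\ge\kappa_i>0$ ($\kappa_i$-strongly convex) and $l_i(x_{-i})=\sum_{k\neq i}\alpha_{i,k}x_k$ with constants $\alpha_{i,k}\in\mathbb{R}$ ($\alpha_{k,k}:=0$); $x_{-i}$ is the vector of actions of players other than $i$. Pseudogradient $\mathcal{G}(x)$ has entries $\mathcal{G}_i(x)=c_i'(x_i)+l_i(x_{-i})$. $K_j=\kappa_j-\sum_{k\neq j}\frac{|\alpha_{j,k}+\alpha_{k,j}|}{2}$. With deceptive player $d$ and deceived set $\mathcal{D}$, $\Lambda$ is the $N\times N$ diagonal matrix with $(i,i)$ entry $\alpha_{i,d}$ if $i\in\mathcal{D}$ and $0$ otherwise, and $\gamma(x,\delta)=\mathcal{G}(x)+\delta\Lambda x$. A map $F:\mathbb{R}^N\to\mathbb{R}^N$ is strongly monotone if there is $\kappa>0$ with $(F(x)-F(y))^\top(x-y)\ge\kappa|x-y|^2$ for all $x,y$. *)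

From mathcomp Require Import all_boot all_order all_algebra.
From mathcomp Require Import all_classical all_reals all_analysis.
Set Implicit Arguments. Unset Strict Implicit. Unset Printing Implicit Defensive.
Import Order.TTheory GRing.Theory Num.Theory.
Local Open Scope ring_scope.

Section Game.
Variables (R : realType) (N : nat).

Definition agg_l (alpha : 'I_N -> 'I_N -> R) (x : 'I_N -> R) (i : 'I_N) : R :=
  \sum_(k < N | k != i) alpha i k * x k.

Definition pseudograd (c : 'I_N -> R -> R) (alpha : 'I_N -> 'I_N -> R)
  (x : 'I_N -> R) : 'I_N -> R :=
  fun i => derive1 (c i) (x i) + agg_l alpha x i.

Definition Lambda_app (alpha : 'I_N -> 'I_N -> R) (d : 'I_N) (D : {set 'I_N})
  (x : 'I_N -> R) : 'I_N -> R :=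
  fun i => if i \in D then alpha i d * x i else 0.

Definition gamma_map (c : 'I_N -> R -> R) (alpha : 'I_N -> 'I_N -> R) (d : 'I_N)
  (D : {set 'I_N}) (delta : R) (x : 'I_N -> R) : 'I_N -> R :=
  fun i => pseudograd c alpha x i + delta * Lambda_app alpha d D x i.

Definition offdiag (alpha : 'I_N -> 'I_N -> R) (j : 'I_N) : R :=
  \sum_(k < N | k != j) `|alpha j k + alpha k j| / 2.

Definition Kcoef (kappa : 'I_N -> R) (alpha : 'I_N -> 'I_N -> R) (j : 'I_N) : R :=
  kappa j - offdiag alpha j.

(* the quantity -kappa_i/alpha_{i,d} + (1/alpha_{i,d}) sum_{k<>i} |..|/2 whose
   max (over alpha_{i,d}>0) is delta^- and min (over alpha_{i,d}<0) is delta^+ *)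
Definition dbound (kappa : 'I_N -> R) (alpha : 'I_N -> 'I_N -> R) (d i : 'I_N) : R :=
  - kappa i / alpha i d + (1 / alpha i d) * offdiag alpha i.

Definition above_delta_minus kappa alpha d (D : {set 'I_N}) (delta : R) : Prop :=
  forall i, i \in D -> 0 < alpha i d -> dbound kappa alpha d i < delta.

Definition below_delta_plus kappa alpha d (D : {set 'I_N}) (delta : R) : Prop :=
  forall i, i \in D -> alpha i d < 0 -> delta < dbound kappa alpha d i.

Definition in_I kappa alpha d (D : {set 'I_N}) (delta : R) : Prop :=
  if [forall i in D, 0 < alpha i d] then above_delta_minus kappa alpha d D delta
  else if [forall i in D, alpha i d < 0] then below_delta_plus kappa alpha d D delta
  else above_delta_minus kappa alpha d D delta /\ below_delta_plus kappa alpha d D delta.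

Definition strongly_monotone (F : ('I_N -> R) -> ('I_N -> R)) : Prop :=
  exists k : R, 0 < k /\ forall x y : 'I_N -> R,
    \sum_(i < N) (F x i - F y i) * (x i - y i) >= k * \sum_(i < N) (x i - y i) ^+ 2.

End Game.

From mathcomp Require Import all_boot all_order all_algebra.
From mathcomp Require Import all_classical all_reals all_analysis.
From mathcomp Require Import ring lra.
Import Order.TTheory GRing.Theory Num.Theory.
Local Open Scope ring_scope.

(* With u = x - y, the pairing <gamma(x, delta) - gamma(y, delta), u> splits
   into three parts. The cost terms give at least sum_i kappa_i u_i^2, by the
   mean value theorem and c_i'' >= kappa_i. The coupling terms are the quadratic
   form of the symmetric matrix (alpha + alpha^T)/2, bounded below by
   -sum_i offdiag_i u_i^2 since 2 b u_i u_k >= -|b| (u_i^2 + u_k^2). The deceptive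
   term adds delta alpha_{i,d} u_i^2 for i in D. Hence u_i^2 carries the weight
   K_i + delta alpha_{i,d} = (delta - dbound_i) alpha_{i,d} for i in D (and K_i
   otherwise), which delta in I makes positive; the smallest weight is then a
   modulus of strong monotonicity. *)

Lemma derive1_ge_strongly_monotone {R : realType} (f : R -> R) (k : R) :
  (forall x, derivable f x 1) -> (forall x, k <= derive1 f x) ->
  forall a b, k * (a - b) ^+ 2 <= (f a - f b) * (a - b).
Proof.
move=> df hk a b; wlog ba : a b / b <= a.
  move=> H; case: (leP b a) => [|/ltW ab]; first exact: H.
  by rewrite -sqrrN opprB -[(f a - f b) * _]mulrNN !opprB; exact: H.
have [z _ ->] := @MVT_segment R f (derive1 f) b a ba
  (fun x _ => ltac:(rewrite derive1E; exact: derivableP))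
  (derivable_within_continuous (fun x _ => df x)).
by rewrite expr2 mulrA !ler_wpM2r ?subr_ge0 ?hk.
Qed.

Lemma mul_ge_neg_half_normr_sqrD {R : realFieldType} (b p q : R) :
  - (`|b| / 2 * (p ^+ 2 + q ^+ 2)) <= b * p * q.
Proof.
case: (lerP 0 b) => hb.
- rewrite ger0_norm //; have := mulr_ge0 hb (sqr_ge0 (p + q)); nra.
- have nb : 0 <= - b by rewrite oppr_ge0 ltW.
  rewrite ltr0_norm //; have := mulr_ge0 nb (sqr_ge0 (p - q)); nra.
Qed.

Lemma sym_form_ge {R : realFieldType} {n : nat} (b : 'I_n -> 'I_n -> R)
    (u : 'I_n -> R) : (forall i k, b i k = b k i) ->
  - \sum_i (\sum_k `|b i k|) * u i ^+ 2 <= \sum_i \sum_k b i k * u i * u k.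
Proof.
move=> bC.
set S := \sum_i _ * _.
have twoS : \sum_i \sum_k `|b i k| * (u i ^+ 2 + u k ^+ 2) = 2 * S.
  under eq_bigr do under eq_bigr do rewrite mulrDr.
  under eq_bigr do rewrite big_split /=.
  rewrite big_split /= [X in _ + X]exchange_big /=.
  under [X in _ + X]eq_bigr do under eq_bigr do rewrite bC.
  rewrite /S -mulr2n mulr_natl; congr (_ *+ 2).
  by apply: eq_bigr => i _; rewrite mulr_suml.
apply: le_trans _ (ler_sum _ (fun i _ => ler_sum _
  (fun k _ => mul_ge_neg_half_normr_sqrD (b i k) (u i) (u k)))).
have -> : \sum_i \sum_k - (`|b i k| / 2 * (u i ^+ 2 + u k ^+ 2)) =
    - ((\sum_i \sum_k `|b i k| * (u i ^+ 2 + u k ^+ 2)) / 2).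
  rewrite mulr_suml -sumrN; apply: eq_bigr => i _.
  by rewrite mulr_suml -sumrN; apply: eq_bigr => k _; rewrite mulrAC.
rewrite twoS; lra.
Qed.

Lemma strongly_monotone_weighted {R : realType} {N : nat}
    (w : 'I_N -> R) (F : ('I_N -> R) -> 'I_N -> R) :
  (forall i, 0 < w i) ->
  (forall x y, \sum_i w i * (x i - y i) ^+ 2 <= \sum_i (F x i - F y i) * (x i - y i)) ->
  strongly_monotone F.
Proof.
move=> w_gt0 Fw; exists (\big[Num.min/1]_i w i); split; first exact: lt_bigmin.
move=> x y; apply: le_trans (Fw x y); rewrite mulr_sumr; apply: ler_sum => i _.
by rewrite ler_wpM2r ?sqr_ge0 ?bigmin_le.
Qed.

Section Game.
Context {R : realType} {N : nat}.
Variables (kappa : 'I_N -> R) (alpha : 'I_N -> 'I_N -> R) (d : 'I_N).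
Variables (D : {set 'I_N}) (delta : R).
Hypothesis alpha_diag0 : forall k, alpha k k = 0.

Lemma agg_lE (u : 'I_N -> R) i : agg_l alpha u i = \sum_k alpha i k * u k.
Proof. by rewrite [RHS](bigD1 i) //= alpha_diag0 mul0r add0r. Qed.

Lemma offdiagE i : offdiag alpha i = \sum_k `|(alpha i k + alpha k i) / 2|.
Proof.
rewrite [RHS](bigD1 i) //= alpha_diag0 addr0 mul0r normr0 add0r.
by rewrite /offdiag; apply: eq_bigr => k _; rewrite normrM [`|_^-1|]ger0_norm.
Qed.

Lemma agg_l_form_sym (u : 'I_N -> R) :
  \sum_i agg_l alpha u i * u i =
  \sum_i \sum_k (alpha i k + alpha k i) / 2 * u i * u k.
Proof.
set S := \sum_i \sum_k alpha i k * u i * u k.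
have ST : \sum_i \sum_k alpha k i * u i * u k = S.
  rewrite exchange_big; apply: eq_bigr => i _; apply: eq_bigr => k _.
  by rewrite mulrAC.
have e i k : (alpha i k + alpha k i) / 2 * u i * u k =
    (alpha i k * u i * u k + alpha k i * u i * u k) / 2 by ring.
under [RHS]eq_bigr do (under eq_bigr do rewrite e; rewrite -mulr_suml big_split /=).
rewrite -mulr_suml big_split /= ST -/S.
suff -> : \sum_i agg_l alpha u i * u i = S by lra.
by apply: eq_bigr => i _; rewrite agg_lE mulr_suml; apply: eq_bigr => k _; rewrite mulrAC.
Qed.

Lemma agg_l_form_ge (u : 'I_N -> R) :
  - \sum_i offdiag alpha i * u i ^+ 2 <= \sum_i agg_l alpha u i * u i.
Proof.
under eq_bigr do rewrite offdiagE.
by rewrite agg_l_form_sym; apply: sym_form_ge => i k; rewrite addrC.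
Qed.

Lemma Kcoef_dbound {i} :
  alpha i d != 0 -> Kcoef kappa alpha i = - (dbound kappa alpha d i * alpha i d).
Proof. by move=> nz; rewrite /Kcoef /dbound; field. Qed.

Lemma Kcoef_add_gt0 i :
  alpha i d != 0 ->
  (0 < alpha i d -> dbound kappa alpha d i < delta) ->
  (alpha i d < 0 -> delta < dbound kappa alpha d i) ->
  0 < Kcoef kappa alpha i + delta * alpha i d.
Proof.
move=> nz above below; rewrite (Kcoef_dbound nz) addrC -mulrBl.
case: (ltgtP (alpha i d) 0) nz => [a_lt0 _ | a_gt0 _ | -> /eqP //].
- by rewrite nmulr_lgt0 // subr_lt0 below.
- by rewrite pmulr_lgt0 // subr_gt0 above.
Qed.

Lemma in_I_bounds {i} :
  in_I kappa alpha d D delta -> i \in D ->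
  (0 < alpha i d -> dbound kappa alpha d i < delta) /\
  (alpha i d < 0 -> delta < dbound kappa alpha d i).
Proof.
move=> + iD; rewrite /in_I; case: ifP => [/forallP all_gt0 | _].
  move=> above; split=> [|a_lt0]; first exact: above.
  by have := all_gt0 i; rewrite iD lt_gtF.
case: ifP => [/forallP all_lt0 | _ [above below]].
  move=> below; split=> [a_gt0|]; last exact: below.
  by have := all_lt0 i; rewrite iD lt_gtF.
by split; [exact: above | exact: below].
Qed.

Definition gamma_weight i :=
  Kcoef kappa alpha i + (if i \in D then delta * alpha i d else 0).

Lemma gamma_weight_gt0 i :
  (forall i, i \in D -> alpha i d != 0) -> (forall j, 0 < Kcoef kappa alpha j) ->
  in_I kappa alpha d D delta -> 0 < gamma_weight i.
Proof.
move=> nz K_gt0 deltaI; rewrite /gamma_weight; case: ifP => iD; last by rewrite addr0.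
by have [above below] := in_I_bounds deltaI iD; apply: Kcoef_add_gt0; first exact: nz.
Qed.

Variable c : 'I_N -> R -> R.

Lemma gamma_mapB (x y : 'I_N -> R) i :
  gamma_map c alpha d D delta x i - gamma_map c alpha d D delta y i =
  derive1 (c i) (x i) - derive1 (c i) (y i) + agg_l alpha (fun k => x k - y k) i
  + delta * Lambda_app alpha d D (fun k => x k - y k) i.
Proof.
have -> : agg_l alpha (fun k => x k - y k) i = agg_l alpha x i - agg_l alpha y i.
  by rewrite /agg_l -sumrB; apply: eq_bigr => k _; rewrite mulrBr.
by rewrite /gamma_map /pseudograd /Lambda_app; case: (i \in D); ring.
Qed.

Lemma gamma_map_form_ge :
  (forall i x, derivable (derive1 (c i)) x 1) ->
  (forall i x, kappa i <= derive1n 2 (c i) x) ->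
  forall x y, \sum_i gamma_weight i * (x i - y i) ^+ 2 <=
    \sum_i (gamma_map c alpha d D delta x i - gamma_map c alpha d D delta y i)
           * (x i - y i).
Proof.
move=> c'_der c''_ge x y; set u := fun k => x k - y k.
have -> : \sum_i gamma_weight i * (x i - y i) ^+ 2 =
    \sum_i kappa i * u i ^+ 2 - \sum_i offdiag alpha i * u i ^+ 2
    + \sum_i delta * Lambda_app alpha d D u i * u i.
  have wE i : gamma_weight i * (x i - y i) ^+ 2 = kappa i * u i ^+ 2
      - offdiag alpha i * u i ^+ 2 + delta * Lambda_app alpha d D u i * u i.
    by rewrite /gamma_weight /Kcoef /Lambda_app /u; case: (i \in D); ring.
  by under eq_bigr do rewrite wE; rewrite big_split sumrB.
have -> : \sum_i (gamma_map c alpha d D delta x i - gamma_map c alpha d D delta y i)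
           * (x i - y i) =
    \sum_i (derive1 (c i) (x i) - derive1 (c i) (y i)) * u i
    + \sum_i agg_l alpha u i * u i + \sum_i delta * Lambda_app alpha d D u i * u i.
  by under eq_bigr do rewrite gamma_mapB 2!mulrDl; rewrite !big_split.
rewrite lerD2r lerD ?agg_l_form_ge //; apply: ler_sum => i _.
exact: derive1_ge_strongly_monotone (c'_der i) (c''_ge i) _ _.
Qed.

End Game.

Theorem lemma4 (R : realType) (N : nat)
  (c : 'I_N -> R -> R) (kappa : 'I_N -> R) (alpha : 'I_N -> 'I_N -> R)
  (d : 'I_N) (D : {set 'I_N}) :
  (forall i x, derivable (c i) x 1 /\ derivable (derive1 (c i)) x 1) ->
  (forall i, 0 < kappa i) ->
  (forall i x, kappa i <= derive1n 2 (c i) x) ->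
  (forall k, alpha k k = 0) ->
  d \notin D ->
  (forall i, i \in D -> alpha i d != 0) ->
  (forall j, 0 < Kcoef kappa alpha j) ->
  forall delta : R, in_I kappa alpha d D delta ->
  strongly_monotone (gamma_map c alpha d D delta).
Proof.
move=> c_der _ c''_ge alpha_diag0 _ nz K_gt0 delta deltaI.
apply: (strongly_monotone_weighted (gamma_weight kappa alpha d D delta)).
- by move=> i; apply: gamma_weight_gt0.
- by apply: gamma_map_form_ge => // i x; case: (c_der i x).
Qed.
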